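(* Let $\mathbf v=(v_1,\dots,v_m)$ and $\mathbf k=(k_1,\dots,k_m)$ be $m$-tuples of positive integers with $\mathbf v\ge\mathbf k$, and let $t\le m$ be a positive integer with $t\le\sum_i k_i$. Then \[ C(\mathbf v,\mathbf k,t)\ \ge\ \max_{\{i_1,\dots,i_t\}\subseteq\{1,\dots,m\}}\left\lceil\frac{v_{i_1}}{k_{i_1}}\left\lceil\frac{v_{i_2}}{k_{i_2}}\cdots\left\lceil\frac{v_{i_t}}{k_{i_t}}\right\rceil\cdots\right\rceil\right\rceil, \] where the maximum is over all sets of $t$ distinct indices (taken in any order).
   Context: Let $X_1,\dots,X_m$ be pairwise disjoint sets with $|X_i|=v_i$. A block is an $m$-tuple $(B_1,\dots,B_m)$ with $B_i\subseteq X_i$, $|B_i|=k_i$. An $m$-tuple of sets $(T_1,\dots,T_m)$ is $(\mathbf v,\mathbf k,t)$-admissible if $T_i\subseteq X_i$, $|T_i|\le k_i$ for all $i$ and $\sum_i|T_i|=t$; it is contained in a block if $T_i\subseteq B_i$ for all $i$. A generalized covering design ${\rm GC}(\mathbf v,\mathbf k,t)$ is a finite family (repetitions allowed) of blocks containing every admissible tuple in at least one block; $C(\mathbf v,\mathbf k,t)$ is the minimum number of blocks of such a design. *)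

From mathcomp Require Import all_boot all_order.
Set Implicit Arguments. Unset Strict Implicit. Unset Printing Implicit Defensive.

(* The m pairwise disjoint point sets X_1..X_m are modelled as 'I_(v i),
   i : 'I_m (disjointness is automatic: they live in different types). *)

Definition settuple (m : nat) (v : 'I_m -> nat) :=
  forall i : 'I_m, {set 'I_(v i)}.

Definition is_block m (v k : 'I_m -> nat) (B : settuple v) : Prop :=
  forall i, #|B i| = k i.

Definition admissible m (v k : 'I_m -> nat) (t : nat) (T : settuple v) : Prop :=
  (forall i, #|T i| <= k i) /\ \sum_(i < m) #|T i| = t.

Definition contained_in m (v : 'I_m -> nat) (T B : settuple v) : Prop :=
  forall i, T i \subset B i.

(* A generalized covering design GC(v,k,t) with N blocks (repetitions
   allowed), given as a family D : 'I_N -> blocks. *)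
Definition is_GC m (v k : 'I_m -> nat) (t N : nat) (D : 'I_N -> settuple v) : Prop :=
  (forall j, is_block k (D j)) /\
  (forall T : settuple v, admissible k t T -> exists j, contained_in T (D j)).

Definition ceildiv (a b : nat) : nat := (a + b.-1) %/ b.

Definition nested_ceil m (v k : 'I_m -> nat) (s : seq 'I_m) : nat :=
  foldr (fun i acc => ceildiv (v i * acc) (k i)) 1 s.

From mathcomp Require Import all_boot all_order.
From mathcomp Require Import zify.

Set Implicit Arguments.
Unset Strict Implicit.
Unset Printing Implicit Defensive.

(* Choosing one point x_i in X_i for each i in s gives an admissible tuple of
   singletons, so a covering design contains, for every such choice, a block
   through all of them.  For the first index i of s and a point p of X_i, the
   blocks through p still cover every choice on the rest of s, hence number at
   least the nested ceiling B of the rest; counting incidences between points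
   of X_i and blocks, each block meeting X_i in k_i points, gives
   v_i * B <= k_i * N, and induction on s concludes. *)

Lemma ceildiv_le a b n : 0 < b -> a <= n * b -> ceildiv a b <= n.
Proof.
move=> b_gt0 le_a_nb; rewrite /ceildiv -ltnS ltn_divLR // mulSn.
have : b.-1 < b by rewrite prednK.
lia.
Qed.

Lemma sum_card_incident (I P : finType) (J : {set I}) (B : I -> {set P}) :
  \sum_(p : P) #|[set j in J | p \in B j]| = \sum_(j in J) #|B j|.
Proof.
transitivity (\sum_(p : P) \sum_(j in J) (p \in B j : nat)).
  apply: eq_bigr => p _; rewrite -sum1_card big_mkcond [RHS]big_mkcond /=.
  by apply: eq_bigr => j _; rewrite inE; case: (j \in J); case: (p \in B j).
rewrite exchange_big /=; apply: eq_bigr => j _.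
by rewrite -sum1_card [RHS]big_mkcond.
Qed.

Section TransversalCovering.
Variables (m : nat) (v k : 'I_m -> nat) (N : nat) (D : 'I_N -> settuple v).
Hypothesis v_gt0 : forall i, 0 < v i.
Hypothesis k_gt0 : forall i, 0 < k i.
Hypothesis card_D : forall j i, #|D j i| = k i.

Definition covers_transversals (s : seq 'I_m) (J : {set 'I_N}) : Prop :=
  forall x : (forall l, 'I_(v l)),
    exists2 j, j \in J & forall l, l \in s -> x l \in D j l.

Lemma covers_transversals_through (i : 'I_m) (s : seq 'I_m) (J : {set 'I_N})
    (p : 'I_(v i)) :
  i \notin s -> covers_transversals (i :: s) J ->
  covers_transversals s [set j in J | p \in D j i].
Proof.
move=> i_notin_s cov x.
pose xp l := if l == i then insubd (x l) (val p) else x l.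
have xp_i : xp i = p.
  by rewrite /xp eqxx; apply: val_inj; rewrite val_insubd ltn_ord.
have [j jJ xp_in] := cov xp.
exists j; first by rewrite inE jJ -xp_i xp_in ?mem_head.
move=> l ls; have := xp_in l; rewrite inE ls orbT => /(_ isT).
by rewrite /xp; case: eqP => // eq_li; rewrite -eq_li ls in i_notin_s.
Qed.

Lemma card_incident_blocks (i : 'I_m) (J : {set 'I_N}) :
  \sum_(p : 'I_(v i)) #|[set j in J | p \in D j i]| = #|J| * k i.
Proof.
rewrite sum_card_incident (eq_bigr (fun=> k i)) ?sum_nat_const //.
by move=> j _; rewrite card_D.
Qed.

Lemma nested_ceil_le_covering (s : seq 'I_m) (J : {set 'I_N}) :
  uniq s -> covers_transversals s J -> nested_ceil v k s <= #|J|.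
Proof.
elim: s J => [|i s IH] J /=.
  move=> _ cov; have [j jJ _] := cov (fun l => Ordinal (v_gt0 l)).
  by rewrite card_gt0; apply/set0Pn; exists j.
case/andP=> i_notin_s uniq_s cov; apply: ceildiv_le => //.
rewrite -card_incident_blocks.
have -> : v i * nested_ceil v k s = \sum_(p : 'I_(v i)) nested_ceil v k s.
  by rewrite sum_nat_const card_ord.
apply: leq_sum => p _; apply: IH => //.
exact: covers_transversals_through.
Qed.

Lemma GC_covers_transversals (t : nat) (s : seq 'I_m) :
  is_GC k t D -> uniq s -> size s = t -> covers_transversals s [set: 'I_N].
Proof.
move=> [_ cov] uniq_s size_s x.
pose T : settuple v := fun l => if l \in s then [set x l] else set0.
have card_T l : #|T l| = (l \in s).
  by rewrite /T; case: (l \in s); rewrite ?cards1 ?cards0.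
have [|j T_in_Dj] := cov T.
  split=> [l|]; first by rewrite card_T; case: (l \in s).
  rewrite -size_s -(card_uniqP uniq_s) -sum1_card [RHS]big_mkcond /=.
  by apply: eq_bigr => l _; rewrite card_T; case: (l \in s).
by exists j => // l ls; have := T_in_Dj l; rewrite /T ls sub1set.
Qed.

End TransversalCovering.

Theorem corollary5p2 (m : nat) (v k : 'I_m -> nat) (t : nat) :
  (forall i, 0 < v i) -> (forall i, 0 < k i) -> (forall i, k i <= v i) ->
  0 < t -> t <= m -> t <= \sum_(i < m) k i ->
  forall (N : nat) (D : 'I_N -> settuple v), is_GC k t D ->
  forall s : seq 'I_m, uniq s -> size s = t ->
  nested_ceil v k s <= N.
Proof.
(* The bound holds without [k <= v] and the constraints on [t]; these only
   make GC(v,k,t) nonempty. *)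
move=> v_gt0 k_gt0 _ _ _ _ N D GC_D s uniq_s size_s.
rewrite -(card_ord N) -cardsT.
apply: (nested_ceil_le_covering v_gt0 k_gt0 GC_D.1 uniq_s).
exact (GC_covers_transversals k_gt0 GC_D uniq_s size_s).
Qed.
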